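(* Let $R$ be a $\lambda$-ring and let $x\in R$ be an element which is both even (of some finite degree) and odd (of some finite degree). Then $\lambda^i(x)$ is nilpotent for every $i\ge 1$ (in particular $x=\lambda^1(x)$ is nilpotent), and $\lambda_t(x)$ is a unit of the polynomial ring $R[t]$.
   Context: A $\lambda$-ring means a special $\lambda$-ring in the sense of SGA6: a commutative ring $R$ with operations $\lambda^n:R\to R$ ($n\ge0$), $\lambda^0=1$, $\lambda^1=\mathrm{id}$, such that $\lambda_t(x)=\sum_n\lambda^n(x)t^n$ satisfies $\lambda_t(x+y)=\lambda_t(x)\lambda_t(y)$ together with the universal polynomial identities for $\lambda^n(xy)$ and $\lambda^m(\lambda^n(x))$. Set $\sigma_t(x)=\sum_n\sigma^n(x)t^n=\lambda_{-t}(x)^{-1}$. An element $x$ is even of degree $n$ if $\lambda_t(x)$ is a polynomial of degree $n$, and odd of degree $n$ if $\sigma_t(x)$ is a polynomial of degree $n$. *)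

From HB Require Import structures.
From mathcomp Require Import all_boot all_order all_algebra.
Set Implicit Arguments. Unset Strict Implicit. Unset Printing Implicit Defensive.
Import Order.TTheory GRing.Theory Num.Theory.
Local Open Scope ring_scope.

(** Integer polynomials in N variables, as iterated univariate polynomials:
    mpoly 0 = int, mpoly N.+1 = {poly mpoly N}.  Variable k (k < N) is the
    indeterminate adjoined at stage k+1. *)
Fixpoint mpoly (N : nat) : comNzRingType :=
  if N is k.+1 then ({poly mpoly k} : comNzRingType) else (int : comNzRingType).

(** the variable xi_i in mpoly N (0 if i >= N) *)
Fixpoint mvar (N : nat) (i : nat) : mpoly N :=
  match N return mpoly N with
  | 0 => 0
  | k.+1 => (if i == k then 'X else (mvar k i)%:P : {poly mpoly k})
  end.

Fixpoint meval (R : comNzRingType) (N : nat) : mpoly N -> (nat -> R) -> R :=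
  match N return mpoly N -> (nat -> R) -> R with
  | 0 => fun p _ => (p : int)%:~R
  | k.+1 => fun p v =>
      \sum_(i < size (p : {poly mpoly k})) meval ((p : {poly mpoly k})`_i) v * v k ^+ i
  end.

Definition esym (N k : nat) : mpoly N :=
  \sum_(I : {set 'I_N} | #|I| == k) \prod_(i in I) mvar N i.

(** Universal polynomial for lambda^n(x y): in 2n variables, the variables
    0..n-1 stand for lambda^1 x .. lambda^n x and n..2n-1 for
    lambda^1 y .. lambda^n y.  P_n is characterised by
    P_n(e_1(xi),..,e_n(xi), e_1(eta),..,e_n(eta)) = e_n(xi_i eta_j), where
    xi_i = variable i, eta_j = variable n+j (i, j < n). *)
Definition prod_target (n : nat) : mpoly (n + n)%N :=
  \sum_(A : {set 'I_n * 'I_n} | #|A| == n)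
     \prod_(p in A) (mvar (n + n)%N p.1 * mvar (n + n)%N (n + p.2)%N).

Definition prod_subst (T : Type) (n : nat) (a b : nat -> T) (k : nat) : T :=
  if (k < n)%N then a k.+1 else b (k - n)%N.+1.

Definition esym_xi (n k : nat) : mpoly (n + n)%N :=
  \sum_(I : {set 'I_n} | #|I| == k) \prod_(i in I) mvar (n + n)%N i.
Definition esym_eta (n k : nat) : mpoly (n + n)%N :=
  \sum_(I : {set 'I_n} | #|I| == k) \prod_(i in I) mvar (n + n)%N (n + i)%N.

Definition is_P_prod (n : nat) (Q : mpoly (n + n)%N) : Prop :=
  meval Q (prod_subst n (esym_xi n) (esym_eta n)) = prod_target n.

(** Universal polynomial for lambda^m(lambda^n x): in mn variables
    standing for lambda^1 x, ..., lambda^(mn) x, characterised by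
    P_{m,n}(e_1(xi), ..., e_mn(xi)) = coefficient of t^m in
    prod_{|S| = n} (1 + xi^S t), xi = (xi_0, ..., xi_(mn-1)). *)
Definition comp_target (m n : nat) : mpoly (m * n)%N :=
  \sum_(A : {set {set 'I_(m * n)%N}} | (#|A| == m) && [forall S in A, #|S| == n])
     \prod_(S in A) \prod_(i in S) mvar (m * n)%N i.

Definition is_P_comp (m n : nat) (Q : mpoly (m * n)%N) : Prop :=
  meval Q (fun k => esym (m * n)%N k.+1) = comp_target m n.

(** Special lambda-ring structure (SGA6) on a commutative ring R given by
    operations lam n = lambda^n. *)
Record is_lambda_ring (R : comNzRingType) (lam : nat -> R -> R) : Prop := {
  lam0 : forall x, lam 0 x = 1;
  lam1 : forall x, lam 1 x = x;
  lam_add : forall n x y, lam n (x + y) = \sum_(i < n.+1) lam i x * lam (n - i)%N y;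
  lam_mul : forall n (Q : mpoly (n + n)%N), is_P_prod Q ->
      forall x y, lam n (x * y) =
        meval Q (prod_subst n (fun k => lam k x) (fun k => lam k y));
  lam_comp : forall m n (Q : mpoly (m * n)%N), is_P_comp Q ->
      forall x, lam m (lam n x) = meval Q (fun k => lam k.+1 x)
}.

(** sigma_t(x) = lambda_(-t)(x)^(-1): coefficients sigma^0..sigma^n, computed
    by sigma^0 = 1, sigma^k = sum_(i=1..k) (-1)^(i+1) lambda^i(x) sigma^(k-i). *)
Fixpoint sigma_seq (R : comNzRingType) (lam : nat -> R -> R) (x : R) (n : nat) : seq R :=
  if n is k.+1 then
    let s := sigma_seq lam x k in
    rcons s (\sum_(1 <= i < k.+2) (-1) ^+ i.+1 * lam i x * nth 0 s (k.+1 - i)%N)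
  else [:: 1].

Definition sigma (R : comNzRingType) (lam : nat -> R -> R) (n : nat) (x : R) : R :=
  nth 0 (sigma_seq lam x n) n.

(** x is even of degree n: lambda_t(x) is a polynomial of degree n *)
Definition is_even_deg (R : comNzRingType) (lam : nat -> R -> R) (x : R) (n : nat) :=
  lam n x != 0 /\ forall k, (n < k)%N -> lam k x = 0.

(** x is odd of degree n: sigma_t(x) is a polynomial of degree n *)
Definition is_odd_deg (R : comNzRingType) (lam : nat -> R -> R) (x : R) (n : nat) :=
  sigma lam n x != 0 /\ forall k, (n < k)%N -> sigma lam k x = 0.

Definition nilpotent (R : comNzRingType) (a : R) := exists k : nat, a ^+ k = 0.

Definition lambda_poly (R : comNzRingType) (lam : nat -> R -> R) (x : R) (n : nat)
  : {poly R} := \poly_(i < n.+1) lam i x.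

From HB Require Import structures.
From mathcomp Require Import all_boot all_order all_algebra.
Set Implicit Arguments. Unset Strict Implicit. Unset Printing Implicit Defensive.
Import GRing.Theory.
Local Open Scope ring_scope.

(** Since [sigma_t(x) lambda_(-t)(x) = 1], an element that is both even and odd
    makes [lambda_t(x)] a polynomial whose inverse [sigma_(-t)(x)] is again a
    polynomial.  In a commutative ring, the non-constant coefficients of an
    invertible polynomial are nilpotent: the leading coefficient is, because
    it kills the top coefficients of the inverse one after the other, and
    removing a nilpotent leading term leaves a unit of smaller degree. *)

Lemma unit_subr_nilpotent (R : comNzRingType) (a b c : R) k :
  a * b = 1 -> c ^+ k = 0 -> (a - c) * (b * \sum_(j < k) (c * b) ^+ j) = 1.
Proof.
move=> ab1 ck0; rewrite mulrA mulrBl ab1.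
have cbk0 : (c * b) ^+ k = 0 by rewrite exprMn ck0 mul0r.
by rewrite -opprB mulNr -subrX1 cbk0 sub0r opprK.
Qed.

Lemma lead_coef_exp_mul_eq0 (R : comNzRingType) (A B : {poly R}) (c : R) k :
  (1 < size A)%N -> (size B <= k)%N -> A * B = c%:P -> lead_coef A ^+ k * c = 0.
Proof.
move=> szA; elim: k B c => [|k IHk] B c szB AB.
  move: szB; rewrite leqn0 size_poly_eq0 => /eqP B0.
  by move: AB; rewrite B0 mulr0 => /esym/eqP; rewrite polyC_eq0 => /eqP ->; rewrite mulr0.
(* The coefficient of [A * B] of degree [size A + k - 1 > 0] is [lead_coef A * B`_k]. *)
have aBk0 : lead_coef A * B`_k = 0.
  have [szBk | ltkB] := leqP (size B) k; first by rewrite (leq_sizeP _ _ szBk) ?mulr0.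
  have szBE : size B = k.+1 by apply/eqP; rewrite eqn_leq szB ltkB.
  have -> : B`_k = lead_coef B by rewrite lead_coefE szBE.
  rewrite mul_lead_coef AB coefC szBE.
  by case: (size A) szA => [|[|s]] //= _; rewrite addnS.
have szaB : (size (lead_coef A *: B) <= k)%N.
  apply/leq_sizeP => j; rewrite leq_eqVlt coefZ => /orP[/eqP <- // | ltkj].
  by rewrite (leq_sizeP _ _ szB) ?mulr0.
have := IHk _ (lead_coef A * c) szaB.
by rewrite -scalerAr AB -mul_polyC -polyCM mulrA -exprSr => ->.
Qed.

Lemma unit_poly_coef_nilpotent (R : comNzRingType) (A B : {poly R}) :
  A * B = 1 -> forall i, (0 < i)%N -> nilpotent A`_i.
Proof.
elim: {A}(size A) {-2}A B (leqnn (size A)) => [|N IHN] A B szA AB i i_gt0.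
  by exists 1%N; rewrite expr1 (leq_sizeP _ _ szA).
have [szA1 | szA1] := leqP (size A) 1; first by exists 1%N; rewrite expr1 (leq_sizeP _ _ szA1).
set a := lead_coef A; set d := (size A).-1.
have anil : a ^+ size B = 0.
  by rewrite -[LHS]mulr1 (lead_coef_exp_mul_eq0 szA1 (leqnn _)) // AB.
have [-> | neq_id] := eqVneq i d; first by exists (size B); rewrite /d -lead_coefE.
set A' := A - a%:P * 'X^d.
have coefA' j : A'`_j = if j == d then 0 else A`_j.
  rewrite coefB coefCM coefXn; case: eqP => [-> | _]; last by rewrite mulr0 subr0.
  by rewrite mulr1 /a lead_coefE subrr.
have szA' : (size A' <= N)%N.
  have le_dN : (d <= N)%N by rewrite /d -ltnS prednK ?(ltn_trans _ szA1).
  apply: leq_trans le_dN; apply/leq_sizeP => j; rewrite leq_eqVlt coefA'.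
  case/orP=> [/eqP -> | ltdj]; first by rewrite eqxx.
  by rewrite (gtn_eqF ltdj) nth_default // -(prednK (ltnW szA1)).
have anilP : (a%:P * 'X^d) ^+ size B = 0 by rewrite exprMn -rmorphXn /= anil mul0r.
have := IHN _ _ szA' (unit_subr_nilpotent AB anilP) i i_gt0.
by rewrite coefA' (negbTE neq_id).
Qed.

Lemma size_sigma_seq (R : comNzRingType) (lam : nat -> R -> R) x k :
  size (sigma_seq lam x k) = k.+1.
Proof. by elim: k => [|k IHk] //=; rewrite size_rcons IHk. Qed.

Lemma nth_sigma_seq (R : comNzRingType) (lam : nat -> R -> R) x k j :
  (j <= k)%N -> nth 0 (sigma_seq lam x k) j = sigma lam j x.
Proof.
elim: k => [|k IHk]; first by rewrite leqn0 => /eqP ->.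
rewrite leq_eqVlt => /orP[/eqP -> // | ltjk].
by rewrite /= nth_rcons size_sigma_seq ltjk IHk.
Qed.

Lemma sigmaS (R : comNzRingType) (lam : nat -> R -> R) x k :
  sigma lam k.+1 x =
  \sum_(i < k.+1) (-1) ^+ i.+2 * lam i.+1 x * sigma lam (k - i)%N x.
Proof.
rewrite /sigma /= nth_rcons size_sigma_seq ltnn eqxx big_add1 /= big_mkord.
by apply: eq_bigr => i _; rewrite nth_sigma_seq // subSS leq_subr.
Qed.

(** [lambda_(-t)(x) sigma_t(x) = 1], coefficient of [t^(k+1)]. *)
Lemma lambda_sigma_conv (R : comNzRingType) (lam : nat -> R -> R) x k :
  lam 0%N x = 1 ->
  \sum_(j < k.+2) (-1) ^+ j * lam j x * sigma lam (k.+1 - j)%N x = 0.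
Proof.
move=> lam0x; rewrite big_ord_recl /= expr0 lam0x !mul1r subn0 sigmaS -big_split.
apply: big1 => i _; rewrite /bump /= add1n subSS.
by rewrite !exprS !mulN1r opprK !mulNr subrr.
Qed.

Definition sigma_neg_poly (R : comNzRingType) (lam : nat -> R -> R) (x : R) (m : nat)
  : {poly R} := \poly_(i < m.+1) ((-1) ^+ i * sigma lam i x).

Section LambdaSigmaInverse.

Variables (R : comNzRingType) (lam : nat -> R -> R) (x : R) (n m : nat).
Hypothesis lam0x : lam 0%N x = 1.
Hypothesis lam_deg : forall k, (n < k)%N -> lam k x = 0.
Hypothesis sigma_deg : forall k, (m < k)%N -> sigma lam k x = 0.

Lemma coef_lambda_poly j : (lambda_poly lam x n)`_j = lam j x.
Proof. by rewrite coef_poly; case: ltnP => // /lam_deg ->. Qed.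

Lemma coef_sigma_neg_poly j : (sigma_neg_poly lam x m)`_j = (-1) ^+ j * sigma lam j x.
Proof. by rewrite coef_poly; case: ltnP => // /sigma_deg ->; rewrite mulr0. Qed.

Lemma lambda_poly_mul_sigma_neg_poly : lambda_poly lam x n * sigma_neg_poly lam x m = 1.
Proof.
apply/polyP => -[|k]; rewrite coefM coef1 /=.
  by rewrite big_ord1 coef_lambda_poly coef_sigma_neg_poly lam0x expr0 !mul1r.
rewrite -[RHS](mulr0 ((-1) ^+ k.+1)) -[in RHS](lambda_sigma_conv k lam0x) mulr_sumr.
apply: eq_bigr => -[j ltjk] _ /=; rewrite coef_lambda_poly coef_sigma_neg_poly.
have -> : (-1) ^+ k.+1 = (-1) ^+ (k.+1 - j) * (-1) ^+ j :> R by rewrite -exprD subnK.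
rewrite -mulrA !mulrA -(mulrA _ ((-1) ^+ j) ((-1) ^+ j)) -expr2 sqrr_sign mulr1.
by rewrite (mulrC (lam j x)).
Qed.

End LambdaSigmaInverse.

Theorem mainTheorem1 (R : comNzRingType) (lam : nat -> R -> R)
  (HR : is_lambda_ring lam) (x : R) (n m : nat)
  (Heven : is_even_deg lam x n) (Hodd : is_odd_deg lam x m) :
  (forall i : nat, (0 < i)%N -> nilpotent (lam i x)) /\
  (exists q : {poly R}, lambda_poly lam x n * q = 1).
Proof.
case: Heven => _ lam_deg; case: Hodd => _ sigma_deg.
have inv := lambda_poly_mul_sigma_neg_poly (lam0 HR x) lam_deg sigma_deg.
split; last by exists (sigma_neg_poly lam x m).
move=> i i_gt0; have [_ | lt_ni] := leqP i n.
  by rewrite -(coef_lambda_poly lam_deg); exact: unit_poly_coef_nilpotent inv i i_gt0.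
by exists 1%N; rewrite expr1 lam_deg.
Qed.
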